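(* For every lifted Bayesian network for conditional probability logic (LBN-CPL) $\mathfrak{G}$ over a relational signature $\sigma$ there is an LBN-CPL $\mathfrak{G}'$ over a relational signature $\sigma'\supseteq\sigma$ such that, for every finite domain $D$, the probability distribution on $\sigma$-structures with domain $D$ induced by $\mathfrak{G}$ equals the distribution of the $\sigma$-reducts of the structures under the distribution induced by $\mathfrak{G}'$, and such that every relation symbol $R\in\sigma'$ is either a root node of the graph of $\mathfrak{G}'$ or has only root nodes as parents, and in the latter case all probabilities $\mu(R\mid\chi_{R,i})$ associated with $R$ in $\mathfrak{G}'$ are $0$ or $1$.
   Context: Relational signatures are possibly multi-sorted, without equality; a finite domain assigns a finite set to each sort; $\sigma$-structures and sort-appropriate tuples are as usual. Conditional probability logic formulas (CPL) over $\sigma$: atomic formulas $R(t_1,\dots,t_n)$ with sort-appropriate variables or constants; closure under $\neg,\wedge,\vee,\rightarrow$ and $\forall_x,\exists_x$; and for any real $r\ge 0$, CPL formulas $\varphi,\psi,\theta,\tau$ and a tuple of distinct variables $\vec{y}$ (which become bound), the formulas $r+\|\varphi\mid\psi\|_{\vec{y}}\ge\|\theta\mid\tau\|_{\vec{y}}$ and $\|\varphi\mid\psi\|_{\vec{y}}\ge\|\theta\mid\tau\|_{\vec{y}}+r$. Semantics in a finite structure $\mathfrak{X}$ under an assignment $\iota$: first-order clauses as usual; writing $|\varphi|_{\vec{y},\iota}$ for the number of sort-appropriate tuples $\vec{b}$ with $\mathfrak{X}\models_{\iota_{\vec{y}:\vec{b}}}\varphi$, the formula $r+\|\varphi\mid\psi\|_{\vec{y}}\ge\|\theta\mid\tau\|_{\vec{y}}$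 holds iff $|\tau|_{\vec{y},\iota}>0$, $|\psi|_{\vec{y},\iota}>0$ and $r+\frac{|\varphi\wedge\psi|_{\vec{y},\iota}}{|\psi|_{\vec{y},\iota}}\ge\frac{|\theta\wedge\tau|_{\vec{y},\iota}}{|\tau|_{\vec{y},\iota}}$, and analogously for the other form. An LBN-CPL over $\sigma$ consists of: a directed acyclic graph $G$ with node set $\sigma$; for each $R\in\sigma$ a finite tuple $(\chi_{R,i}(\vec{x}))_{i\le\nu_R}$ of CPL formulas over the signature $\mathrm{par}(R)$ of $G$-parents of $R$ ($\vec{x}$ sort-appropriate of length the arity of $R$) such that $\forall\vec{x}\bigvee_i\chi_{R,i}(\vec{x})$ is true in all $\mathrm{par}(R)$-structures and $\exists\vec{x}(\chi_{R,i}(\vec{x})\wedge\chi_{R,j}(\vec{x}))$ is unsatisfiable for $i\ne j$; and for each $R$ and $i$ a number $\mu(R\mid\chi_{R,i})\in[0,1]$. On a finite domain $D$ it induces the distribution on $\sigma$-structures with domain $D$ given by the Bayesian network with nodes the ground atoms $R(\vec{a})$, an edge from $R_1(\vec{b})$ to $R_2(\vec{a})$ whenever $R_1\to R_2$ in $G$, and where $R(\vec{a})$ is true with probability $\mu(R\mid\chi_{R,i})$ for the unique $i$ such that $\chi_{R,i}(\vec{a})$ holds in the structure given by the parent values. Root nodes have no parents (their only partition is the formula ''true''). *)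

From HB Require Import structures.
From mathcomp Require Import all_boot all_order all_algebra.
From mathcomp Require Import reals.
Set Implicit Arguments.
Unset Strict Implicit.
Unset Printing Implicit Defensive.
Import Order.TTheory GRing.Theory Num.Theory.
Local Open Scope ring_scope.

Record signature (Srt : finType) := Signature {
  sym : finType;
  ar : sym -> seq Srt }.

(* Variables carry their sort: (name, sort). *)
Definition var (Srt : finType) := (nat * Srt)%type.

(* FCge1 r ys f1 f2 f3 f4  :  r + ||f1 | f2||_ys >= ||f3 | f4||_ys      *)
(* FCge2 r ys f1 f2 f3 f4  :  ||f1 | f2||_ys >= ||f3 | f4||_ys + r      *)
Inductive form (Srt : finType) (S : Type) (R : Type) :=
| FTrue
| FAtom of S & seq (var Srt)
| FNeg of form Srt S R
| FAnd of form Srt S R & form Srt S R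
| FOr of form Srt S R & form Srt S R
| FImp of form Srt S R & form Srt S R
| FAll of var Srt & form Srt S R
| FEx of var Srt & form Srt S R
| FCge1 of R & seq (var Srt) & form Srt S R & form Srt S R & form Srt S R & form Srt S R
| FCge2 of R & seq (var Srt) & form Srt S R & form Srt S R & form Srt S R & form Srt S R.

Arguments FTrue {Srt S R}.

Section Syntax.
Variables (Srt : finType) (sg : signature Srt) (R : realType).
Local Notation form := (form Srt (sym sg) R).

Fixpoint syms (f : form) : seq (sym sg) :=
  match f with
  | FTrue => [::]
  | FAtom s _ => [:: s]
  | FNeg g => syms g
  | FAnd g h | FOr g h | FImp g h => syms g ++ syms h
  | FAll _ g | FEx _ g => syms g
  | FCge1 _ _ f1 f2 f3 f4 | FCge2 _ _ f1 f2 f3 f4 =>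
      syms f1 ++ syms f2 ++ syms f3 ++ syms f4
  end.

Fixpoint fv (f : form) : seq (var Srt) :=
  match f with
  | FTrue => [::]
  | FAtom _ vs => vs
  | FNeg g => fv g
  | FAnd g h | FOr g h | FImp g h => fv g ++ fv h
  | FAll x g | FEx x g => filter (predC1 x) (fv g)
  | FCge1 _ ys f1 f2 f3 f4 | FCge2 _ ys f1 f2 f3 f4 =>
      filter (predC (mem ys)) (fv f1 ++ fv f2 ++ fv f3 ++ fv f4)
  end.

Fixpoint wf (f : form) : bool :=
  match f with
  | FTrue => true
  | FAtom s vs => map snd vs == ar s
  | FNeg g => wf g
  | FAnd g h | FOr g h | FImp g h => wf g && wf h
  | FAll _ g | FEx _ g => wf g
  | FCge1 r ys f1 f2 f3 f4 | FCge2 r ys f1 f2 f3 f4 =>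
      [&& 0 <= r, uniq ys, wf f1, wf f2, wf f3 & wf f4]
  end.
End Syntax.

(* A finite domain is a finite type E with a sort labelling srt; the   *)
(* domain of sort s is {e | srt e = s}.                                *)
(* a structure is the (finite) set of ground atoms that are true.      *)
Section Structures.
Variables (Srt : finType) (sg : signature Srt) (E : finType) (srt : E -> Srt).

Definition wtup (s : sym sg) :=
  {t : (size (ar s)).-tuple E | map srt t == ar s}.

Definition gatom := {s : sym sg & wtup s}.

Definition structure := {set gatom}.

Definition rel_of (A : structure) (s : sym sg) (l : seq E) : bool :=
  [exists a in A, (tag a == s) && (tval (val (tagged a)) == l)].

End Structures.

Section Semantics.
Variables (Srt : finType) (sg : signature Srt) (R : realType)
          (E : finType) (srt : E -> Srt) (A : structure sg srt).

Definition env := var Srt -> option E.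
Definition env0 : env := fun _ => None.
Definition upd (en : env) (x : var Srt) (e : E) : env :=
  fun v => if v == x then Some e else en v.
Definition updl (en : env) (ys : seq (var Srt)) (l : seq E) : env :=
  foldl (fun en' p => upd en' p.1 p.2) en (zip ys l).

Fixpoint sat (en : env) (f : form Srt (sym sg) R) {struct f} : bool :=
  match f with
  | FTrue => true
  | FAtom s vs => all (fun v => en v != None) vs && rel_of A s (pmap en vs)
  | FNeg g => ~~ sat en g
  | FAnd g h => sat en g && sat en h
  | FOr g h => sat en g || sat en h
  | FImp g h => sat en g ==> sat en h
  | FAll x g => [forall e : E, (srt e == x.2) ==> sat (upd en x e) g]
  | FEx x g => [exists e : E, (srt e == x.2) && sat (upd en x e) g]
  | FCge1 r ys f1 f2 f3 f4 =>
      let cnt (p : (size ys).-tuple E -> bool) : nat :=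
        #|[pred t : (size ys).-tuple E | (map srt t == map snd ys) && p t]| in
      let c12 := cnt (fun t => sat (updl en ys t) f1 && sat (updl en ys t) f2) in
      let c2  := cnt (fun t => sat (updl en ys t) f2) in
      let c34 := cnt (fun t => sat (updl en ys t) f3 && sat (updl en ys t) f4) in
      let c4  := cnt (fun t => sat (updl en ys t) f4) in
      [&& (0 < c4)%N, (0 < c2)%N &
          (c34%:R / c4%:R <= r + c12%:R / c2%:R :> R)]
  | FCge2 r ys f1 f2 f3 f4 =>
      let cnt (p : (size ys).-tuple E -> bool) : nat :=
        #|[pred t : (size ys).-tuple E | (map srt t == map snd ys) && p t]| in
      let c12 := cnt (fun t => sat (updl en ys t) f1 && sat (updl en ys t) f2) in
      let c2  := cnt (fun t => sat (updl en ys t) f2) in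
      let c34 := cnt (fun t => sat (updl en ys t) f3 && sat (updl en ys t) f4) in
      let c4  := cnt (fun t => sat (updl en ys t) f4) in
      [&& (0 < c4)%N, (0 < c2)%N &
          (c34%:R / c4%:R + r <= c12%:R / c2%:R :> R)]
  end.
End Semantics.
Arguments env0 {Srt E}.

(* par Q S  means  Q -> S is an edge of G (Q is a parent of S).        *)
(* For each S: variables xs S (the tuple x of chi_{S,i}(x)),           *)
(* formulas chi S i and probabilities mu S i, for i < nu S.            *)
Record lbn (Srt : finType) (R : realType) (sg : signature Srt) := LBN {
  par : rel (sym sg);
  par_acyclic : forall x y, par x y -> ~~ connect par y x;
  nu : sym sg -> nat;
  xs : sym sg -> seq (var Srt);
  chi : forall S : sym sg, 'I_(nu S) -> form Srt (sym sg) R;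
  mu : forall S : sym sg, 'I_(nu S) -> R;
  xs_ok : forall S, uniq (xs S) && (map snd (xs S) == ar S);
  chi_wf : forall (S : sym sg) (i : 'I_(nu S)),
    [/\ wf (@chi S i), all (fun Q => par Q S) (syms (@chi S i))
      & all (mem (xs S)) (fv (@chi S i))];
  chi_cover : forall S (E : finType) (srt : E -> Srt) (A : structure sg srt)
      (t : seq E), map srt t = map snd (xs S) ->
      exists i, sat A (updl env0 (xs S) t) (@chi S i);
  chi_disj : forall S (E : finType) (srt : E -> Srt) (A : structure sg srt)
      (t : seq E) (i j : 'I_(nu S)), i != j -> map srt t = map snd (xs S) ->
      ~~ (sat A (updl env0 (xs S) t) (@chi S i)
          && sat A (updl env0 (xs S) t) (@chi S j));
  root_true : forall S, (forall Q, ~~ par Q S) ->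
      nu S = 1%N /\ (forall i, @chi S i = FTrue);
  mu_range : forall S i, 0 <= @mu S i <= 1 }.

Definition is_root (Srt : finType) (R : realType) (sg : signature Srt)
  (G : lbn R sg) (S : sym sg) : Prop := forall Q, ~~ par G Q S.

(* The probability of the structure A (domain (E, srt)) under the
   Bayesian network induced by G: the product over all ground atoms
   S(a) of mu(S | chi_{S,i}) if S(a) holds in A and 1 - mu(S | chi_{S,i})
   otherwise, where i is the unique index with A |= chi_{S,i}(a). *)
Definition lbn_prob (Srt : finType) (R : realType) (sg : signature Srt)
  (G : lbn R sg) (E : finType) (srt : E -> Srt) (A : structure sg srt) : R :=
  \prod_(a : gatom sg srt)
    \sum_(i < nu G (tag a))
      (if sat A (updl env0 (xs G (tag a)) (tval (val (tagged a))))
              (@chi _ _ _ G (tag a) i)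
       then (if a \in A then @mu _ _ _ G (tag a) i else 1 - @mu _ _ _ G (tag a) i) else 0).

Definition is_reduct (Srt : finType) (sg sg' : signature Srt)
  (iota : sym sg -> sym sg') (E : finType) (srt : E -> Srt)
  (B : structure sg' srt) (A : structure sg srt) : bool :=
  [forall S : sym sg, forall t : (size (ar S)).-tuple E,
     rel_of A S t == rel_of B (iota S) t].

From Pilot Require Import Defs.
From HB Require Import structures.
From mathcomp Require Import all_boot all_order all_algebra.
From mathcomp Require Import reals.
From mathcomp Require Import zify.
From Stdlib Require Import Lia.
Set Implicit Arguments.
Unset Strict Implicit.
Unset Printing Implicit Defensive.
Import Order.TTheory GRing.Theory Num.Theory.

(* For every symbol [S] of [G] and every case [chi_{S,i}] of [S], the new network
   adds a root symbol, the [i]-th coin of [S], true at each tuple with probability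
   [mu(S | chi_{S,i})], and it keeps a copy of [S] as a deterministic child of the
   coins: the copy holds at [x] iff some case [chi_{S,i}(x)] holds and the [i]-th
   coin of [S] is up at [x], the atoms of [chi_{S,i}] being unfolded recursively
   into their own definitions; as [G] is acyclic, #|sigma| unfoldings suffice.
   Given the coins, the reduct is the unique fixpoint of the step
   [X |-> {a | the coin of the case of [a] that holds in [X] is up}], since the
   value of an atom only depends on atoms with fewer ancestors.  Summing over the
   coins with a given fixpoint [A] factors over the atoms: for each atom the coin
   of the case holding in [A] must agree with [A], which contributes [mu] or
   [1 - mu], and every other coin sums to 1.  This is the probability of [A]
   under [G]. *)

Section Environments.
Variables (Srt E : finType).
Implicit Types (en : env Srt E) (ys : seq (var Srt)) (l : seq E) (v : var Srt).

Lemma updl_cons en y ys a l : updl en (y :: ys) (a :: l) = updl (upd en y a) ys l.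
Proof. by []. Qed.

Lemma updl_notin en ys l v : v \notin ys -> updl en ys l v = en v.
Proof.
elim: ys en l => [|y ys IH] en [|a l] //=; rewrite inE negb_or => /andP[vy vys].
by rewrite updl_cons IH // /upd (negbTE vy).
Qed.

Lemma updl_in en en' ys l v : v \in ys -> size l = size ys ->
  updl en ys l v = updl en' ys l v.
Proof.
elim: ys en en' l => [|y ys IH] en en' [|a l] //= v_in [size_l].
rewrite !updl_cons; have [v_ys|v_ys] := boolP (v \in ys); first exact: IH.
move: v_in; rewrite inE (negbTE v_ys) orbF => /eqP v_y.
by rewrite !updl_notin // /upd v_y eqxx.
Qed.

Lemma eq_updl en en' ys l v : size l = size ys ->
  (v \notin ys -> en v = en' v) -> updl en ys l v = updl en' ys l v.
Proof.
move=> size_l eq_en; have [v_ys|v_ys] := boolP (v \in ys); first exact: updl_in.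
by rewrite !updl_notin // eq_en.
Qed.

Lemma map_updl en ys l : uniq ys -> size l = size ys -> map (updl en ys l) ys = map Some l.
Proof.
elim: ys en l => [|y ys IH] en [|a l] //= /andP[y_ys uniq_ys] [size_l].
by rewrite updl_cons IH // updl_notin // /upd eqxx.
Qed.

Lemma pmap_map_Some (f : var Srt -> option E) vs l :
  map f vs = map Some l -> pmap f vs = l /\ all (fun v => f v != None) vs.
Proof. by elim: vs l => [|v vs IH] [|a l] //= [-> /IH [-> ->]]. Qed.

Lemma map_Some_pmap (f : var Srt -> option E) vs :
  all (fun v => f v != None) vs -> map f vs = map Some (pmap f vs).
Proof. by elim: vs => //= v vs IH /andP [f_v /IH ->]; case: (f v) f_v. Qed.

End Environments.

Section Semantics.
Variables (Srt : finType) (R : realType) (E : finType) (srt : E -> Srt).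
Local Open Scope ring_scope.

Definition count_tuples n (ss : seq Srt) (p : seq E -> bool) : nat :=
  #|[pred t : n.-tuple E | (map srt t == ss) && p t]|.

Definition cmp_counts (b : bool) (r : R) n ss (p1 p2 p3 p4 : seq E -> bool) : bool :=
  let c12 := count_tuples n ss (fun t => p1 t && p2 t) in
  let c2 := count_tuples n ss p2 in
  let c34 := count_tuples n ss (fun t => p3 t && p4 t) in
  let c4 := count_tuples n ss p4 in
  [&& (0 < c4)%N, (0 < c2)%N &
     if b then (c34%:R / c4%:R <= r + c12%:R / c2%:R :> R)
     else (c34%:R / c4%:R + r <= c12%:R / c2%:R :> R)].

Lemma eq_count_tuples n ss (p q : seq E -> bool) :
  (forall l, size l = n -> p l = q l) -> count_tuples n ss p = count_tuples n ss q.
Proof. by move=> eq_pq; apply: eq_card => t; rewrite !inE eq_pq ?size_tuple. Qed.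

Lemma eq_cmp_counts b r n m ss p1 p2 p3 p4 q1 q2 q3 q4 : n = m ->
  (forall l, size l = n -> [/\ p1 l = q1 l, p2 l = q2 l, p3 l = q3 l & p4 l = q4 l]) ->
  cmp_counts b r n ss p1 p2 p3 p4 = cmp_counts b r m ss q1 q2 q3 q4.
Proof.
move=> <- eq_p; rewrite /cmp_counts.
rewrite (@eq_count_tuples _ _ (fun t => p1 t && p2 t) (fun t => q1 t && q2 t));
  last by move=> l /eq_p [-> -> _ _].
rewrite (@eq_count_tuples _ _ p2 q2); last by move=> l /eq_p [_ -> _ _].
rewrite (@eq_count_tuples _ _ (fun t => p3 t && p4 t) (fun t => q3 t && q4 t));
  last by move=> l /eq_p [_ _ -> ->].
by rewrite (@eq_count_tuples _ _ p4 q4) // => l /eq_p [_ _ _ ->].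
Qed.

Variable (sg : signature Srt).
Implicit Types (A : structure sg srt) (f : Defs.form Srt (sym sg) R).

Lemma sat_FCge1 A en r ys f1 f2 f3 f4 :
  sat A en (FCge1 r ys f1 f2 f3 f4) =
  cmp_counts true r (size ys) (map snd ys) (fun t => sat A (updl en ys t) f1)
    (fun t => sat A (updl en ys t) f2) (fun t => sat A (updl en ys t) f3)
    (fun t => sat A (updl en ys t) f4).
Proof. by []. Qed.

Lemma sat_FCge2 A en r ys f1 f2 f3 f4 :
  sat A en (FCge2 r ys f1 f2 f3 f4) =
  cmp_counts false r (size ys) (map snd ys) (fun t => sat A (updl en ys t) f1)
    (fun t => sat A (updl en ys t) f2) (fun t => sat A (updl en ys t) f3)
    (fun t => sat A (updl en ys t) f4).
Proof. by []. Qed.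

Lemma eq_sat_fv A f en en' : {in fv f, en =1 en'} -> sat A en f = sat A en' f.
Proof.
elim: f en en' => [|s vs|g IHg|g IHg h IHh|g IHg h IHh|g IHg h IHh|x g IHg|x g IHg
  |r ys f1 IH1 f2 IH2 f3 IH3 f4 IH4|r ys f1 IH1 f2 IH2 f3 IH3 f4 IH4] en en' eq_en.
9,10: rewrite ?sat_FCge1 ?sat_FCge2; apply: eq_cmp_counts => // l size_l;
  split; [apply: IH1|apply: IH2|apply: IH3|apply: IH4] => v fv_v;
  apply: eq_updl => // v_ys; apply: eq_en;
  by rewrite /= mem_filter /= v_ys !mem_cat fv_v ?orbT.
4-6: by rewrite /= (IHg _ en') ?(IHh _ en') // => v v_in; apply: eq_en; rewrite /= mem_cat v_in ?orbT.
- by [].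
- by rewrite /= (eq_in_all (a2 := fun v => en' v != None)) ?(eq_in_pmap (f2 := en'))
    // => v /eq_en ->.
- by rewrite /= (IHg _ en').
- apply: eq_forallb => e; congr (_ ==> _); apply: IHg => v v_in; rewrite /upd.
  by case: eqP => // /eqP v_x; apply: eq_en; rewrite /= mem_filter /= v_x.
- apply: eq_existsb => e; congr (_ && _); apply: IHg => v v_in; rewrite /upd.
  by case: eqP => // /eqP v_x; apply: eq_en; rewrite /= mem_filter /= v_x.
Qed.

Lemma eq_sat_syms A A' f :
  (forall s, s \in syms f -> rel_of A s =1 rel_of A' s) -> forall en, sat A en f = sat A' en f.
Proof.
elim: f => [|s vs|g IHg|g IHg h IHh|g IHg h IHh|g IHg h IHh|x g IHg|x g IHg
  |r ys f1 IH1 f2 IH2 f3 IH3 f4 IH4|r ys f1 IH1 f2 IH2 f3 IH3 f4 IH4] eq_A en.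
9,10: rewrite ?sat_FCge1 ?sat_FCge2; apply: eq_cmp_counts => // l _;
  by split; [rewrite IH1 | rewrite IH2 | rewrite IH3 | rewrite IH4] => // s s_in;
  apply: eq_A; rewrite /= !mem_cat s_in ?orbT.
4-6: by rewrite /= IHg ?IHh // => s s_in; apply: eq_A; rewrite /= mem_cat s_in ?orbT.
- by [].
- by rewrite /= eq_A // inE.
- by rewrite /= IHg.
- by rewrite /=; apply: eq_forallb => e; rewrite IHg.
- by rewrite /=; apply: eq_existsb => e; rewrite IHg.
Qed.

Lemma sat_bigor A en m (F : 'I_m -> Defs.form Srt (sym sg) R) :
  sat A en (\big[@FOr _ _ _/FNeg FTrue]_(i < m) F i) = [exists i, sat A en (F i)].
Proof. by rewrite (big_morph (sat A en) (id1 := false) (op1 := orb)) // big_orE. Qed.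

End Semantics.

Section Translation.
Variables (Srt : finType) (R : realType).
Implicit Types (σ : var Srt -> var Srt) (ys : seq (var Srt)) (c : nat).

Definition shift_var c (x : var Srt) : var Srt := (c + x.1, x.2).

Lemma shift_var_inj c : injective (shift_var c).
Proof. by case=> n s [m t] [/addnI -> ->]. Qed.

Definition max_index ys : nat := \max_(y <- ys) y.1.

Lemma max_index_ge ys y : y \in ys -> y.1 <= max_index ys.
Proof. by move=> y_in; apply: leq_bigmax_seq. Qed.

Definition bind1 σ c x y := if y == x then shift_var c x else σ y.
Definition bindv σ c ys y := if y \in ys then shift_var c y else σ y.

(* A variable [x] bound in [f] becomes [shift_var c x]; this avoids capture as
   long as all indices of [σ] are below [c], an invariant kept by raising [c]
   past the indices of the new names. *)
Fixpoint transl (S1 S2 : Type) (atf : nat -> S1 -> seq (var Srt) -> Defs.form Srt S2 R)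
  σ c (f : Defs.form Srt S1 R) {struct f} : Defs.form Srt S2 R :=
  match f with
  | FTrue => FTrue
  | FAtom s vs => atf c s (map σ vs)
  | FNeg g => FNeg (transl atf σ c g)
  | FAnd g h => FAnd (transl atf σ c g) (transl atf σ c h)
  | FOr g h => FOr (transl atf σ c g) (transl atf σ c h)
  | FImp g h => FImp (transl atf σ c g) (transl atf σ c h)
  | FAll x g => FAll (shift_var c x) (transl atf (bind1 σ c x) (c + x.1).+1 g)
  | FEx x g => FEx (shift_var c x) (transl atf (bind1 σ c x) (c + x.1).+1 g)
  | FCge1 r ys f1 f2 f3 f4 =>
      let tr := transl atf (bindv σ c ys) (c + (max_index ys).+1) in
      FCge1 r (map (shift_var c) ys) (tr f1) (tr f2) (tr f3) (tr f4)
  | FCge2 r ys f1 f2 f3 f4 =>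
      let tr := transl atf (bindv σ c ys) (c + (max_index ys).+1) in
      FCge2 r (map (shift_var c) ys) (tr f1) (tr f2) (tr f3) (tr f4)
  end.

Definition sort_preserving σ := forall y, (σ y).2 = y.2.
Definition indices_below c σ := forall y, (σ y).1 < c.

Lemma sort_preserving_bind1 σ c x : sort_preserving σ -> sort_preserving (bind1 σ c x).
Proof. by move=> σ_srt y; rewrite /bind1; case: eqP => [->|]. Qed.

Lemma sort_preserving_bindv σ c ys : sort_preserving σ -> sort_preserving (bindv σ c ys).
Proof. by move=> σ_srt y; rewrite /bindv; case: ifP. Qed.

Lemma indices_below_bind1 σ c x :
  indices_below c σ -> indices_below (c + x.1).+1 (bind1 σ c x).
Proof. by move=> σ_lt y; rewrite /bind1; case: eqP => _ /=; [lia | have := σ_lt y; lia]. Qed.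

Lemma indices_below_bindv σ c ys :
  indices_below c σ -> indices_below (c + (max_index ys).+1) (bindv σ c ys).
Proof.
move=> σ_lt y; rewrite /bindv; case: ifP => [/max_index_ge|_] /=; first lia.
by have := σ_lt y; lia.
Qed.

Lemma updl_rename (E : finType) (en en' : env Srt E) g σ ys l :
  injective g -> size l = size ys -> {in ys, σ =1 g} ->
  (forall y, y \notin ys -> σ y \notin map g ys /\ en (σ y) = en' y) ->
  forall y, updl en (map g ys) l (σ y) = updl en' ys l y.
Proof.
move=> g_inj; elim: ys en en' l => [|y0 ys IH] en en' [|a l] //=.
  by move=> _ _ σ_out y; case: (σ_out y).
move=> [size_l] σ_in σ_out y.
rewrite !updl_cons; apply: IH => // [z z_in|z z_ys]; first by apply: σ_in; rewrite inE z_in orbT.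
move: z_ys; have [->|z_y0] := eqVneq z y0 => z_ys.
  by rewrite σ_in ?inE ?eqxx // (mem_map g_inj) z_ys /upd !eqxx.
have [] := σ_out z; first by rewrite inE negb_or z_y0.
rewrite /= inE negb_or => /andP [σ_z σ_ys] en_z; split => //.
by rewrite /upd (negbTE σ_z) (negbTE z_y0).
Qed.

Section BoundVariables.
Variables (E : finType) (en en' : env Srt E) (σ : var Srt -> var Srt) (c : nat).
Hypotheses (σ_lt : indices_below c σ) (en_σ : forall y, en (σ y) = en' y).

Lemma upd_bind1 x e y : upd en (shift_var c x) e (bind1 σ c x y) = upd en' x e y.
Proof.
rewrite /bind1 /upd; case: (y =P x) => [_|_]; first by rewrite eqxx.
case: eqP => [σ_y|_]; last exact: en_σ.
by have := σ_lt y; rewrite σ_y /=; lia.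
Qed.

Lemma updl_bindv ys l y : size l = size ys ->
  updl en (map (shift_var c) ys) l (bindv σ c ys y) = updl en' ys l y.
Proof.
move=> size_l; apply: updl_rename => // [|z z_in|z z_ys]; first exact: shift_var_inj.
  by rewrite /bindv z_in.
rewrite /bindv (negbTE z_ys); split => //.
by apply/mapP => -[z' _ σ_z]; have := σ_lt z; rewrite σ_z /=; lia.
Qed.

End BoundVariables.

Lemma pmap_map (T U : Type) (f : T -> option U) (g : var Srt -> T) vs :
  pmap f (map g vs) = pmap (f \o g) vs.
Proof. by elim: vs => //= v vs ->. Qed.

Section SatTransl.
Variables (E : finType) (srt : E -> Srt) (sg1 sg2 : signature Srt)
  (A1 : structure sg1 srt) (A2 : structure sg2 srt)
  (atf : nat -> sym sg1 -> seq (var Srt) -> Defs.form Srt (sym sg2) R).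
Hypothesis sat_atf : forall c en s ws, 0 < c -> (forall w, w \in ws -> w.1 < c) ->
  map snd ws = ar s ->
  sat A2 en (atf c s ws) = all (fun v => en v != None) ws && rel_of A1 s (pmap en ws).

Lemma sat_transl (f : Defs.form Srt (sym sg1) R) σ c en en' :
  wf f -> 0 < c -> indices_below c σ -> sort_preserving σ ->
  (forall y, en (σ y) = en' y) -> sat A2 en (transl atf σ c f) = sat A1 en' f.
Proof.
elim: f σ c en en' => [|s vs|g IHg|g IHg h IHh|g IHg h IHh|g IHg h IHh|x g IHg|x g IHg
  |r ys f1 IH1 f2 IH2 f3 IH3 f4 IH4|r ys f1 IH1 f2 IH2 f3 IH3 f4 IH4]
  σ c en en' wf_f c_gt0 σ_lt σ_srt en_σ.
9,10: move: wf_f => /and5P [_ _ wf1 wf2 /andP [wf3 wf4]];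
  rewrite [transl _ _ _ _]/= ?sat_FCge1 ?sat_FCge2 -map_comp;
  apply: eq_cmp_counts => [|l]; rewrite ?size_map // => size_l;
  split; [apply: IH1|apply: IH2|apply: IH3|apply: IH4] => //;
  by [lia | apply: indices_below_bindv | apply: sort_preserving_bindv
      | move=> y; apply: updl_bindv].
4-6: by case/andP: wf_f => wf_g wf_h; rewrite /= (IHg _ _ _ en') ?(IHh _ _ _ en').
- by [].
- rewrite /= sat_atf // ?all_map ?pmap_map; first last.
  + by rewrite -(eqP wf_f) -map_comp; apply: eq_map => y /=; rewrite σ_srt.
  + by move=> w /mapP [y _ ->].
  by rewrite (eq_all (a2 := fun v => en' v != None)) ?(eq_pmap (f2 := en')) // => v /=; rewrite en_σ.
- by rewrite /= (IHg _ _ _ en').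
- apply: eq_forallb => e; congr (_ ==> _); apply: IHg => //.
  + exact: indices_below_bind1.
  + exact: sort_preserving_bind1.
  + exact: upd_bind1.
- apply: eq_existsb => e; congr (_ && _); apply: IHg => //.
  + exact: indices_below_bind1.
  + exact: sort_preserving_bind1.
  + exact: upd_bind1.
Qed.

End SatTransl.

Lemma fv_bindv σ c ys (us vs ws : seq (var Srt)) :
  all (mem (map (bindv σ c ys) vs)) us -> {subset vs <= ws} ->
  all (fun x => (x \in [predC map (shift_var c) ys]) ==>
                (x \in map σ [seq y <- ws | y \in [predC ys]])) us.
Proof.
move=> us_vs vs_ws; apply: sub_all us_vs => v /mapP [y y_vs ->]; apply/implyP.
rewrite /bindv; case: ifP => [y_ys|/negbT y_ys _]; first by rewrite !inE /= map_f.
by apply: map_f; rewrite mem_filter inE /= y_ys vs_ws.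
Qed.

Section TranslSyntax.
Variables (sg1 sg2 : signature Srt)
  (atf : nat -> sym sg1 -> seq (var Srt) -> Defs.form Srt (sym sg2) R).
Implicit Type f : Defs.form Srt (sym sg1) R.

Lemma wf_transl f σ c : (forall c s ws, map snd ws = ar s -> wf (atf c s ws)) ->
  wf f -> sort_preserving σ -> wf (transl atf σ c f).
Proof.
move=> wf_atf; elim: f σ c => [|s vs|g IHg|g IHg h IHh|g IHg h IHh|g IHg h IHh|x g IHg|x g IHg
  |r ys f1 IH1 f2 IH2 f3 IH3 f4 IH4|r ys f1 IH1 f2 IH2 f3 IH3 f4 IH4] σ c wf_f σ_srt /=.
9,10: move: wf_f => /and5P [-> uniq_ys wf1 wf2 /andP [wf3 wf4]];
  have σ'_srt := sort_preserving_bindv c ys σ_srt;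
  by rewrite (map_inj_uniq (@shift_var_inj c)) uniq_ys !IH1 ?IH2 ?IH3 ?IH4.
7,8: by apply: IHg => //; apply: sort_preserving_bind1.
4-6: by case/andP: wf_f => wf_g wf_h; rewrite IHg ?IHh.
- by [].
- by apply: wf_atf; rewrite -(eqP wf_f) -map_comp; apply: eq_map => y /=; rewrite σ_srt.
- exact: IHg.
Qed.

Lemma syms_transl (p : pred (sym sg2)) f σ c :
  (forall c s ws, s \in syms f -> all p (syms (atf c s ws))) -> all p (syms (transl atf σ c f)).
Proof.
elim: f σ c => [|s vs|g IHg|g IHg h IHh|g IHg h IHh|g IHg h IHh|x g IHg|x g IHg
  |r ys f1 IH1 f2 IH2 f3 IH3 f4 IH4|r ys f1 IH1 f2 IH2 f3 IH3 f4 IH4] σ c p_atf /=;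
  rewrite ?all_cat.
9,10: by rewrite IH1 ?IH2 ?IH3 ?IH4 // => c' s ws s_in; apply: p_atf; rewrite /= !mem_cat s_in ?orbT.
4-6: by rewrite IHg ?IHh // => c' s ws s_in; apply: p_atf; rewrite /= mem_cat s_in ?orbT.
- by [].
- by apply: p_atf; rewrite inE.
1-3: exact: IHg.
Qed.

Lemma fv_transl f σ c : (forall c s ws, map snd ws = ar s -> all (mem ws) (fv (atf c s ws))) ->
  wf f -> sort_preserving σ -> all (mem (map σ (fv f))) (fv (transl atf σ c f)).
Proof.
move=> fv_atf; elim: f σ c => [|s vs|g IHg|g IHg h IHh|g IHg h IHh|g IHg h IHh|x g IHg|x g IHg
  |r ys f1 IH1 f2 IH2 f3 IH3 f4 IH4|r ys f1 IH1 f2 IH2 f3 IH3 f4 IH4] σ c wf_f σ_srt /=.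
9,10: move: wf_f => /and5P [_ _ wf1 wf2 /andP [wf3 wf4]]; rewrite all_filter !all_cat;
  have σ'_srt := sort_preserving_bindv c ys σ_srt;
  by rewrite (fv_bindv (IH1 _ _ wf1 σ'_srt)) ?(fv_bindv (IH2 _ _ wf2 σ'_srt))
    ?(fv_bindv (IH3 _ _ wf3 σ'_srt)) ?(fv_bindv (IH4 _ _ wf4 σ'_srt)) // => v v_in;
  rewrite !mem_cat v_in ?orbT.
7,8: rewrite all_filter; apply: sub_all (IHg _ _ wf_f (sort_preserving_bind1 c x σ_srt));
  move=> v /= /mapP [y y_in ->]; apply/implyP; rewrite /bind1;
  by case: ifP => [_|/negbT y_x _]; [rewrite eqxx | apply: map_f; rewrite mem_filter /= y_x].
4-6: case/andP: wf_f => wf_g wf_h; rewrite map_cat all_cat; apply/andP;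
  by split; [apply: sub_all (IHg σ c wf_g σ_srt) | apply: sub_all (IHh σ c wf_h σ_srt)]
    => v /=; rewrite mem_cat => ->; rewrite ?orbT.
- by [].
- by apply: fv_atf; rewrite -(eqP wf_f) -map_comp; apply: eq_map => y /=; rewrite σ_srt.
- exact: IHg.
Qed.

End TranslSyntax.
End Translation.

Section Renaming.
Variables (Srt : finType) (R : realType).
Implicit Types (xs ws : seq (var Srt)) (y : var Srt).

(* Off [xs], and on a sort mismatch, the result is the junk variable [(0, y.2)],
   which keeps the sort. *)
Definition subst_vars xs ws y : var Srt :=
  let z := nth (0, y.2) ws (index y xs) in if z.2 == y.2 then z else (0, y.2).

Definition clamp_var (n : nat) y : var Srt := if y.1 < n then y else (0, y.2).

Lemma subst_vars_sort xs ws : sort_preserving (subst_vars xs ws).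
Proof. by move=> y; rewrite /subst_vars; case: eqP. Qed.

Lemma clamp_var_sort n : sort_preserving (clamp_var n).
Proof. by move=> y; rewrite /clamp_var; case: ifP. Qed.

Lemma map_subst_vars xs ws : uniq xs -> map snd ws = map snd xs ->
  map (subst_vars xs ws) xs = ws.
Proof.
elim: xs ws => [|x xs IH] [|w ws] //= /andP [x_xs uniq_xs] [w_x ws_xs].
rewrite /subst_vars /= eqxx /= w_x eqxx; congr (_ :: _).
rewrite -[RHS](IH ws) //; apply/eq_in_map => y y_xs /=.
by have /negbTE -> : x != y by apply: contraNneq x_xs => ->.
Qed.

Lemma subst_vars_in xs ws y : uniq xs -> map snd ws = map snd xs ->
  y \in xs -> subst_vars xs ws y \in ws.
Proof. by move=> uniq_xs ws_xs y_xs; rewrite -{2}(map_subst_vars uniq_xs ws_xs) map_f. Qed.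

Lemma subst_vars_below xs ws c : 0 < c -> (forall w, w \in ws -> w.1 < c) ->
  indices_below c (subst_vars xs ws).
Proof.
move=> c_gt0 ws_lt y; rewrite /subst_vars; case: eqP => //= _.
have [lt_y|ge_y] := ltnP (index y xs) (size ws); first by apply/ws_lt/mem_nth.
by rewrite nth_default.
Qed.

Lemma clamp_var_below n : 0 < n -> indices_below n (clamp_var n).
Proof. by move=> n_gt0 y; rewrite /clamp_var; case: ifP. Qed.

Lemma clamp_var_id n y : y.1 < n -> clamp_var n y = y.
Proof. by rewrite /clamp_var => ->. Qed.

Variable (sg : signature Srt).
Implicit Types (σ : var Srt -> var Srt) (f : Defs.form Srt (sym sg) R).

Definition rename σ c f := transl (fun _ s ws => FAtom R s ws) σ c f.

Lemma sat_rename (E : finType) (srt : E -> Srt) (A : structure sg srt) σ c f en en' :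
  wf f -> 0 < c -> indices_below c σ -> sort_preserving σ ->
  (forall y, en (σ y) = en' y) -> sat A en (rename σ c f) = sat A en' f.
Proof. exact: sat_transl. Qed.

Lemma wf_rename σ c f : wf f -> sort_preserving σ -> wf (rename σ c f).
Proof. by apply: wf_transl => c' s ws /= ->. Qed.

Lemma syms_rename (p : pred (sym sg)) σ c f : all p (syms f) -> all p (syms (rename σ c f)).
Proof. by move=> /allP p_f; apply: syms_transl => c' s ws /p_f /= ->. Qed.

Lemma fv_rename σ c f : wf f -> sort_preserving σ -> all (mem (map σ (fv f))) (fv (rename σ c f)).
Proof. by apply: fv_transl => c' s ws _; apply/allP. Qed.

End Renaming.

Section Construction.
Variables (Srt : finType) (R : realType) (sg : signature Srt) (G : lbn R sg).
Local Notation chi_ S := (@chi _ _ _ G S).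
Local Notation mu_ S := (@mu _ _ _ G S).

Lemma xs_uniq_ar S : uniq (xs G S) /\ map snd (xs G S) = ar S.
Proof. by case/andP: (xs_ok G S) => uniq_xs /eqP. Qed.

Lemma chi_wf_parents S (i : 'I_(nu G S)) :
  [/\ wf (chi_ S i), all (fun Q => par G Q S) (syms (chi_ S i)) & all (mem (xs G S)) (fv (chi_ S i))].
Proof. exact: chi_wf. Qed.

(* The [.+1] keeps ['I_ncoins] inhabited, so that every copy has a coin parent. *)
Definition ncoins : nat := (\max_(S : sym sg) nu G S).+1.

Lemma nu_le_ncoins S : nu G S <= ncoins.
Proof. exact/leqW/(leq_bigmax (F := nu G)). Qed.

(* [(S, None)] is the copy of [S]; [(S, Some j)] is the root symbol holding the
   coin flips for the [j]-th case [chi_ S j] of [S]. *)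
Definition ext_sig : signature Srt :=
  @Signature Srt (sym sg * option 'I_ncoins)%type (fun p => ar p.1).

Definition coin S (i : 'I_(nu G S)) : sym ext_sig := (S, Some (widen_ord (nu_le_ncoins S) i)).

Definition xs_bound : nat := (\max_(S : sym sg) \max_(v <- xs G S) v.1).+1.

Lemma xs_lt_bound S v : v \in xs G S -> v.1 < xs_bound.
Proof.
move=> v_in; rewrite ltnS; apply: leq_trans (leq_bigmax (F := fun S => \max_(v <- xs G S) v.1) S).
exact: leq_bigmax_seq.
Qed.

Fixpoint def_form (k : nat) (S : sym sg) : Defs.form Srt (sym ext_sig) R :=
  if k is k'.+1 then
    let unfold c Q ws := rename (subst_vars (xs G Q) ws) c (def_form k' Q) in
    \big[@FOr _ _ _/FNeg FTrue]_(i < nu G S)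
      FAnd (transl unfold (clamp_var xs_bound) xs_bound (chi_ S i)) (FAtom R (coin i) (xs G S))
  else FNeg FTrue.

Lemma wf_def_form k S : wf (def_form k S).
Proof.
elim: k S => [|k IH] S //=.
apply: (big_ind (fun f : Defs.form _ _ _ => is_true (wf f))) => //= [f g -> -> //|i _].
rewrite (xs_uniq_ar S).2 eqxx andbT; have [wf_chi _ _] := chi_wf_parents i.
apply: wf_transl _ _ wf_chi (clamp_var_sort _) => c Q ws _.
exact: wf_rename (IH Q) (subst_vars_sort _ _).
Qed.

Lemma syms_def_form k S : all (fun Q : sym ext_sig => Q.2 != None) (syms (def_form k S)).
Proof.
elim: k S => [|k IH] S //=.
apply: (big_ind (fun f : Defs.form _ _ _ =>
                  is_true (all (fun Q : sym ext_sig => Q.2 != None) (syms f))))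
  => //= [f g|i _]; first by rewrite all_cat => -> ->.
by rewrite all_cat andbT; apply: syms_transl => c Q ws _; apply: syms_rename.
Qed.

Lemma fv_def_form k S : all (mem (xs G S)) (fv (def_form k S)).
Proof.
elim: k S => [|k IH] S //=.
apply: (big_ind (fun f : Defs.form _ _ _ => is_true (all (mem (xs G S)) (fv f))))
  => //= [f g|i _]; first by rewrite all_cat => -> ->.
rewrite all_cat; apply/andP; split; last exact/allP.
have [wf_chi _ /allP fv_chi] := chi_wf_parents i.
have fv_unfold c Q ws : map snd ws = ar Q ->
    all (mem ws) (fv (rename (subst_vars (xs G Q) ws) c (def_form k Q))).
  move=> ws_ar; have [uniq_xs xs_ar] := xs_uniq_ar Q.
  apply: sub_all (fv_rename c (wf_def_form k Q) (subst_vars_sort _ _)) => v /mapP [y y_fv ->].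
  by apply: subst_vars_in; rewrite ?xs_ar //; apply: (allP (IH Q)).
apply: sub_all (fv_transl _ fv_unfold wf_chi (clamp_var_sort _)) => v /mapP [y y_fv ->].
by have y_xs := fv_chi y y_fv; rewrite /= clamp_var_id // (xs_lt_bound y_xs).
Qed.

Definition ext_par : rel (sym ext_sig) := fun Q S => (Q.2 != None) && (S.2 == None).

Definition ext_nu (S : sym ext_sig) : nat := if S.2 is None then 2 else 1.

Definition ext_xs (S : sym ext_sig) : seq (var Srt) := xs G S.1.

Definition ext_chi (S : sym ext_sig) (i : 'I_(ext_nu S)) : Defs.form Srt (sym ext_sig) R :=
  if S.2 is None then
    if val i == 0 then def_form #|sym sg| S.1 else FNeg (def_form #|sym sg| S.1)
  else FTrue.

Local Open Scope ring_scope.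

(* Coins beyond [nu G S] are never consulted; they get probability 0. *)
Definition coin_prob S (j : 'I_ncoins) : R := oapp (mu_ S) 0 (insub (val j)).

Lemma coin_prob_widen S i : coin_prob S (widen_ord (nu_le_ncoins S) i) = mu_ S i.
Proof. by rewrite /coin_prob /= valK. Qed.

Definition ext_mu (S : sym ext_sig) (i : 'I_(ext_nu S)) : R :=
  if S.2 is Some j then coin_prob S.1 j else (val i == 0%N)%:R.

Lemma ext_par_acyclic Q S : ext_par Q S -> ~~ connect ext_par S Q.
Proof.
case/andP => Q_coin /eqP S_copy; apply/negP => /connectP [[|S' p] /= p_path Q_last].
  by rewrite Q_last S_copy in Q_coin.
by case/andP: p_path => /andP []; rewrite S_copy.
Qed.

Lemma ext_xs_ok S : uniq (ext_xs S) && (map snd (ext_xs S) == ar S).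
Proof. exact: xs_ok. Qed.

Lemma ext_chi_wf S (i : 'I_(ext_nu S)) : [/\ wf (ext_chi i),
  all (fun Q => ext_par Q S) (syms (ext_chi i)) & all (mem (ext_xs S)) (fv (ext_chi i))].
Proof.
case: S i => S [j|] i //=; rewrite /ext_chi /=.
have par_def : all (fun Q => ext_par Q (S, None)) (syms (def_form #|sym sg| S)).
  by apply: sub_all (syms_def_form _ S) => Q Q_coin; rewrite /ext_par Q_coin.
by case: ifP; rewrite /= ?wf_def_form ?fv_def_form.
Qed.

Lemma ext_chi_cover S (E : finType) (srt : E -> Srt) (A : structure ext_sig srt) (t : seq E) :
  map srt t = map snd (ext_xs S) -> exists i, sat A (updl env0 (ext_xs S) t) (@ext_chi S i).
Proof.
case: S => S [j|] _; first by exists ord0.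
case def_t: (sat A (updl env0 (ext_xs (S, None)) t) (def_form #|sym sg| S)).
  by exists ord0; rewrite /ext_chi /= def_t.
by exists (@Ordinal 2 1 isT); rewrite /ext_chi /= def_t.
Qed.

Lemma ext_chi_disj S (E : finType) (srt : E -> Srt) (A : structure ext_sig srt) (t : seq E)
    (i j : 'I_(ext_nu S)) : i != j -> map srt t = map snd (ext_xs S) ->
  ~~ (sat A (updl env0 (ext_xs S) t) (ext_chi i) && sat A (updl env0 (ext_xs S) t) (ext_chi j)).
Proof.
case: S i j => S [k|] /=; first by case=> [[|?] ?] [[|?] ?].
by case=> [[|[|?]] ?] [[|[|?]] ?] //= _ _; rewrite /ext_chi /=; case: sat.
Qed.

Lemma ext_root_true S : (forall Q, ~~ ext_par Q S) ->
  ext_nu S = 1%N /\ (forall i, @ext_chi S i = FTrue).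
Proof. by case: S => S [j|] no_par //; have := no_par (S, Some ord0). Qed.

Lemma ext_mu_range S i : 0 <= @ext_mu S i <= 1.
Proof.
rewrite /ext_mu /coin_prob; case: S.2 => [j|]; last by case: (_ == _); rewrite ?lexx ?ler01.
by case: insub => [k|] /=; [exact: mu_range | rewrite lexx ler01].
Qed.

Definition ext_lbn : lbn R ext_sig := LBN ext_par_acyclic ext_xs_ok ext_chi_wf
  ext_chi_cover ext_chi_disj ext_root_true ext_mu_range.

Lemma ext_lbn_layers S : is_root ext_lbn S \/
  ((forall Q, par ext_lbn Q S -> is_root ext_lbn Q) /\
   (forall i, @mu _ _ _ ext_lbn S i = 0 \/ @mu _ _ _ ext_lbn S i = 1)).
Proof.
case: S => S [j|]; [left | right]; first by move=> Q; rewrite /= /ext_par /= andbF.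
split; first by case=> Q o /andP [Q_coin _] Q'; rewrite /= /ext_par /= andbC; case: o Q_coin.
by move=> i; rewrite /= /ext_mu /=; case: (_ == _); [right | left].
Qed.

End Construction.

Section GroundAtoms.
Variables (Srt : finType) (sg : signature Srt) (E : finType) (srt : E -> Srt).
Implicit Types (A : structure sg srt) (a : gatom sg srt).

Lemma rel_of_gatom A a : rel_of A (tag a) (tval (val (tagged a))) = (a \in A).
Proof.
apply/existsP/idP => [[b /and3P [b_A /eqP tag_b /eqP val_b]]|a_A]; last by exists a; rewrite a_A !eqxx.
case: a b tag_b val_b b_A => s w [s' w'] /= tag_b; subst s' => val_b.
by have -> : w' = w by apply/val_inj/val_inj.
Qed.

Lemma rel_of_ar A s l : rel_of A s l -> map srt l == ar s.
Proof. by case/existsP => [[s' w] /and3P [_ /eqP /= <- /eqP <-]]; exact: (valP w). Qed.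

Lemma eq_rel_of A A' s : (forall a, tag a = s -> (a \in A) = (a \in A')) ->
  rel_of A s =1 rel_of A' s.
Proof.
move=> eq_A l; apply: eq_existsb => a.
by case: (tag a =P s) => [/eq_A ->|_]; rewrite ?andbF.
Qed.

End GroundAtoms.

Section Unfolding.
Variables (Srt : finType) (R : realType) (sg : signature Srt) (G : lbn R sg)
  (E : finType) (srt : E -> Srt).
Local Notation chi_ S := (@chi _ _ _ G S).
Implicit Types (B : structure (ext_sig G) srt) (A X : structure sg srt) (a : gatom sg srt).

Definition gatom_env a : env Srt E := updl env0 (xs G (tag a)) (tval (val (tagged a))).

Definition def_struct k B : structure sg srt :=
  [set a | sat B (gatom_env a) (def_form G k (tag a))].

Lemma map_updl_xs S (l : seq E) : size l = size (ar S) ->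
  map (updl env0 (xs G S) l) (xs G S) = map Some l.
Proof.
by have [uniq_xs xs_ar] := xs_uniq_ar G S => size_l; rewrite map_updl // size_l -xs_ar size_map.
Qed.

Lemma def_form_ar k B en S : sat B en (def_form G k S) ->
  all (fun v => en v != None) (xs G S) && (map srt (pmap en (xs G S)) == ar S).
Proof.
by case: k => [|k] //=; rewrite sat_bigor => /existsP [i /and3P [_ -> /rel_of_ar]].
Qed.

Lemma rel_of_def_struct k B S l : size l = size (ar S) ->
  rel_of (def_struct k B) S l = sat B (updl env0 (xs G S) l) (def_form G k S).
Proof.
move=> size_l; apply/existsP/idP => [[[S' w] /and3P [w_def /eqP /= <- /eqP w_l]]|def_l].
  by move: w_def; rewrite inE /= /gatom_env w_l.
have := def_form_ar def_l; case: (pmap_map_Some (map_updl_xs size_l)) => -> _ /andP [_ l_ar].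
have size_l' : size l == size (ar S) by apply/eqP.
exists (existT _ S (exist _ (Tuple size_l') l_ar : @wtup _ sg _ srt S)).
by rewrite inE /= /gatom_env def_l !eqxx.
Qed.

Lemma sat_unfold k B c en s ws : 0 < c -> (forall w, w \in ws -> w.1 < c) -> map snd ws = ar s ->
  sat B en (rename (subst_vars (xs G s) ws) c (def_form G k s)) =
  all (fun v => en v != None) ws && rel_of (def_struct k B) s (pmap en ws).
Proof.
move=> c_gt0 ws_lt ws_ar; have [uniq_xs xs_ar] := xs_uniq_ar G s.
have xs_ws : map (subst_vars (xs G s) ws) (xs G s) = ws by rewrite map_subst_vars ?ws_ar.
rewrite (sat_rename _ (wf_def_form G k s) c_gt0 (subst_vars_below _ c_gt0 ws_lt) (subst_vars_sort _ _)
  (en' := en \o subst_vars (xs G s) ws)) //.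
have [ws_def|ws_undef] := boolP (all (fun v => en v != None) ws); last first.
  apply/negbTE; apply: contra ws_undef => /def_form_ar /andP [xs_def _].
  by rewrite -xs_ws all_map.
have size_ws : size (pmap en ws) = size (ar s).
  by rewrite -(size_map Some) -map_Some_pmap // size_map -ws_ar size_map.
rewrite /= rel_of_def_struct //; apply: eq_sat_fv => v /(allP (fv_def_form G k s)) v_xs.
have /eq_in_map eq_xs : map (en \o subst_vars (xs G s) ws) (xs G s) =
    map (updl env0 (xs G s) (pmap en ws)) (xs G s).
  by rewrite map_updl_xs // -map_Some_pmap // map_comp xs_ws.
exact: eq_xs.
Qed.

Definition lift_gatom a (o : option 'I_(ncoins G)) : gatom (ext_sig G) srt :=
  existT (fun S => @wtup _ (ext_sig G) _ srt S) (tag a, o) (tagged a).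

Definition coin_atom a (i : 'I_(nu G (tag a))) : gatom (ext_sig G) srt :=
  lift_gatom a (Some (widen_ord (nu_le_ncoins G (tag a)) i)).

Definition def_step B X : structure sg srt :=
  [set a | [exists i, sat X (gatom_env a) (chi_ (tag a) i) && (coin_atom i \in B)]].

Lemma def_struct_succ k B : def_struct k.+1 B = def_step B (def_struct k B).
Proof.
apply/setP => a; rewrite !inE /= sat_bigor; apply: eq_existsb => i /=.
have size_a : size (tval (val (tagged a))) = size (ar (tag a)) by rewrite size_tuple.
case: (pmap_map_Some (map_updl_xs size_a)) => -> ->.
rewrite (rel_of_gatom B (coin_atom i)); congr (_ && _).
have [wf_chi _ /allP fv_chi] := chi_wf_parents i.
rewrite (sat_transl (sat_unfold k B) wf_chi _ (clamp_var_below (ltn0Sn _)) (clamp_var_sort _)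
  (en' := gatom_env a \o clamp_var (xs_bound G))) //.
by apply: eq_sat_fv => v /fv_chi v_xs; rewrite /= clamp_var_id // (xs_lt_bound v_xs).
Qed.

Definition ancestors S : {set sym sg} :=
  [set Q | [exists Q', par G Q Q' && connect (par G) Q' S]].

Lemma ancestors_notin S : S \notin ancestors S.
Proof.
by rewrite inE; apply/existsP => -[Q' /andP [par_SQ' /(negP (par_acyclic par_SQ'))]].
Qed.

Lemma card_ancestors_par Q S : par G Q S -> #|ancestors Q| < #|ancestors S|.
Proof.
move=> par_QS; apply/proper_card/properP; split.
  apply/subsetP => Q2; rewrite !inE => /existsP [Q' /andP [par_Q2 con_Q']].
  by apply/existsP; exists Q'; rewrite par_Q2 (connect_trans con_Q' (connect1 par_QS)).
by exists Q; [rewrite inE; apply/existsP; exists S; rewrite par_QS connect0 | exact: ancestors_notin].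
Qed.

Lemma card_ancestors_lt S : #|ancestors S| < #|sym sg|.
Proof.
rewrite -cardsT; apply/proper_card/properP; split; first exact: subsetT.
by exists S; [rewrite inE | exact: ancestors_notin].
Qed.

Lemma iter_def_step_agree B k X X' a : #|ancestors (tag a)| < k ->
  (a \in iter k (def_step B) X) = (a \in iter k (def_step B) X').
Proof.
elim: k X X' a => [|k IH] X X' a //= lt_k.
rewrite !inE; apply: eq_existsb => i; congr (_ && _).
have [_ /allP par_chi _] := chi_wf_parents i.
apply: eq_sat_syms => s /par_chi par_s; apply: eq_rel_of => b tag_b; apply: IH; rewrite tag_b.
by move: lt_k; rewrite ltnS; apply: leq_trans (card_ancestors_par par_s).
Qed.

Lemma iter_def_step_const B X X' :
  iter #|sym sg| (def_step B) X = iter #|sym sg| (def_step B) X'.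
Proof. by apply/setP => a; apply/iter_def_step_agree/card_ancestors_lt. Qed.

Lemma def_struct_iter B k : def_struct k B = iter k (def_step B) set0.
Proof.
elim: k => [|k IH]; last by rewrite def_struct_succ IH.
by apply/setP => a; rewrite !inE.
Qed.

Lemma def_struct_fixpoint B A : def_struct #|sym sg| B = A <-> def_step B A = A.
Proof.
rewrite def_struct_iter; split => [<-|fix_A].
  by rewrite -iterS iterSr (iter_def_step_const B (def_step B set0) set0).
by rewrite (iter_def_step_const B set0 A); elim: #|sym sg| => //= n ->.
Qed.

End Unfolding.

Local Open Scope ring_scope.

Section BigOps.
Variable R : comPzRingType.

Definition bern (b : bool) (p : R) : R := if b then p else 1 - p.

Lemma bern_sum (p : R) : bern true p + bern false p = 1.
Proof. by rewrite addrC subrK. Qed.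

Lemma prod_option (T : finType) (F : option T -> R) :
  \prod_(o : option T) F o = F None * \prod_(j : T) F (Some j).
Proof.
rewrite (bigD1 None) //=; congr (_ * _).
rewrite (reindex_omap Some id) /=; last by case.
by apply: eq_bigl => j; rewrite eqxx.
Qed.

Lemma prod_indicator (I : finType) (P : pred I) :
  \prod_(i : I) (P i)%:R = [forall i, P i]%:R :> R.
Proof.
have [/forallP P_all|/forallPn [i not_Pi]] := boolP [forall i, P i].
  by apply: big1 => i _; rewrite P_all.
by rewrite (bigD1 i) //= (negbTE not_Pi) mul0r.
Qed.

Lemma sum_set_prod (I : finType) (F : I -> bool -> R) :
  \sum_(B : {set I}) \prod_(i : I) F i (i \in B) = \prod_(i : I) (F i true + F i false).
Proof.
rewrite (eq_bigr (fun i => \sum_(b : bool) F i b)) => [|i _]; last by rewrite big_bool.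
rewrite bigA_distr_bigA (reindex (fun f : {ffun I -> bool} => [set i | f i])) /=.
  by apply: eq_bigr => f _; apply: eq_bigr => i _; rewrite inE.
apply: onW_bij; exists (fun B : {set I} => [ffun i => i \in B]) => [f|B].
  by apply/ffunP => i; rewrite ffunE inE.
by apply/setP => i; rewrite inE ffunE.
Qed.

End BigOps.

Section Marginal.
Variables (Srt : finType) (R : realType) (sg : signature Srt) (G : lbn R sg)
  (E : finType) (srt : E -> Srt).
Local Notation chi_ S := (@chi _ _ _ G S).
Local Notation mu_ S := (@mu _ _ _ G S).
Implicit Types (B : structure (ext_sig G) srt) (A : structure sg srt) (a : gatom sg srt).

Definition base_gatom (a' : gatom (ext_sig G) srt) : gatom sg srt :=
  existT (fun S => @wtup _ sg _ srt S) (tag a').1 (tagged a').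

Lemma base_lift_gatom a o : base_gatom (lift_gatom a o) = a.
Proof. by case: a. Qed.

Lemma prod_ext_gatom (F : gatom (ext_sig G) srt -> R) :
  \prod_(a' : gatom (ext_sig G) srt) F a' =
  \prod_(a : gatom sg srt)
    (F (lift_gatom a None) * \prod_(j : 'I_(ncoins G)) F (lift_gatom a (Some j))).
Proof.
rewrite (reindex (fun p : gatom sg srt * option 'I_(ncoins G) => lift_gatom p.1 p.2)) /=.
  rewrite -(pair_bigA _ (fun a o => F (lift_gatom a o))) /=.
  by apply: eq_bigr => a _; rewrite prod_option.
apply: onW_bij; exists (fun a' : gatom (ext_sig G) srt => (base_gatom a', (tag a').2)).
  by case=> [[S w] o].
by case=> [[S o] w].
Qed.

Lemma chi_index A a : exists i0, forall i, sat A (gatom_env G a) (chi_ (tag a) i) = (i == i0).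
Proof.
have a_ar : map srt (tval (val (tagged a))) = map snd (xs G (tag a)).
  by rewrite (xs_uniq_ar G (tag a)).2; apply/eqP; exact: (valP (tagged a)).
have [i0 chi_i0] := chi_cover A a_ar; exists i0 => i.
have [->|i_i0] := eqVneq i i0; first exact: chi_i0.
by have := chi_disj A i_i0 a_ar; rewrite chi_i0 andbT => /negbTE.
Qed.

Definition case_holds A a (j : 'I_(ncoins G)) : bool :=
  oapp (fun i => sat A (gatom_env G a) (chi_ (tag a) i)) false (insub (val j)).

Section FixedIndex.
Variables (A : structure sg srt) (a : gatom sg srt) (i0 : 'I_(nu G (tag a))).
Hypothesis chi_i0 : forall i, sat A (gatom_env G a) (chi_ (tag a) i) = (i == i0).

Lemma case_holdsE j : case_holds A a j = (j == widen_ord (nu_le_ncoins G (tag a)) i0).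
Proof.
rewrite /case_holds; case: insubP => [i _ val_i|j_ge] /=.
  by rewrite chi_i0 -(inj_eq val_inj) val_i -[RHS](inj_eq val_inj).
by apply/esym/eqP => j_i0; rewrite j_i0 /= ltn_ord in j_ge.
Qed.

Lemma def_step_mem B : (a \in def_step B A) = (coin_atom i0 \in B).
Proof.
rewrite inE; apply/existsP/idP => [[i]|coin_i0]; first by rewrite chi_i0 => /andP [/eqP -> ->].
by exists i0; rewrite chi_i0 eqxx.
Qed.

End FixedIndex.

Lemma is_reduct_ext B A :
  is_reduct (fun S : sym sg => (S, None) : sym (ext_sig G)) B A =
  [forall a : gatom sg srt, (lift_gatom a None \in B) == (a \in A)].
Proof.
apply/forallP/forallP => [reduct_BA [S w]|lift_BA S].
  have := forallP (reduct_BA S) (val w); rewrite eq_sym.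
  by rewrite (rel_of_gatom A (existT _ S w)) (rel_of_gatom B (lift_gatom (existT _ S w) None)).
apply/forallP => t; have [t_ar|t_ar] := boolP (map srt t == ar S); last first.
  apply/eqP; transitivity false; [apply/negbTE | apply/esym/negbTE];
    by apply: contra t_ar => /rel_of_ar.
have := lift_BA (existT _ S (exist _ t t_ar : @wtup _ sg _ srt S)); rewrite eq_sym.
by rewrite -(rel_of_gatom A (existT _ S _)) -(rel_of_gatom B (lift_gatom (existT _ S _) None)).
Qed.

Lemma ext_lbn_prob B : lbn_prob (ext_lbn G) B = \prod_(a : gatom sg srt)
    (((lift_gatom a None \in B) == (a \in def_struct #|sym sg| B))%:R *
     \prod_(j : 'I_(ncoins G)) bern (lift_gatom a (Some j) \in B) (coin_prob (tag a) j)).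
Proof.
rewrite /lbn_prob prod_ext_gatom; apply: eq_bigr => a _; congr (_ * _).
  rewrite big_ord_recl big_ord1 /= /ext_chi /ext_mu /= inE.
  by case: sat; case: (_ \in B); rewrite /= ?subrr ?subr0 ?addr0 ?add0r.
by apply: eq_bigr => j _; rewrite big_ord1.
Qed.

Definition atom_weight A (a' : gatom (ext_sig G) srt) (b : bool) : R :=
  let a := base_gatom a' in
  if (tag a').2 is Some j then
    bern b (coin_prob (tag a) j) * (if case_holds A a j then (b == (a \in A))%:R else 1)
  else (b == (a \in A))%:R.

Lemma ext_prob_reduct A B :
  (if is_reduct (fun S : sym sg => (S, None) : sym (ext_sig G)) B A
   then lbn_prob (ext_lbn G) B else 0) =
  \prod_(a' : gatom (ext_sig G) srt) atom_weight A a' (a' \in B).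
Proof.
rewrite prod_ext_gatom ext_lbn_prob is_reduct_ext.
pose coins a := \prod_(j : 'I_(ncoins G)) bern (lift_gatom a (Some j) \in B) (coin_prob (tag a) j).
have weight_a a : atom_weight A (lift_gatom a None) (lift_gatom a None \in B) *
    \prod_(j : 'I_(ncoins G)) atom_weight A (lift_gatom a (Some j)) (lift_gatom a (Some j) \in B) =
    ((lift_gatom a None \in B) == (a \in A))%:R * (coins a * ((a \in def_step B A) == (a \in A))%:R).
  rewrite /atom_weight /= !base_lift_gatom big_split /=; congr (_ * (_ * _)).
  have [i0 chi_i0] := chi_index A a.
  under eq_bigr do rewrite base_lift_gatom (case_holdsE chi_i0).
  by rewrite -big_mkcond big_pred1_eq (def_step_mem chi_i0).
under [in RHS]eq_bigr do rewrite weight_a.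
rewrite !big_split /= !prod_indicator.
have [lift_BA|] := ifP; last by rewrite !mul0r.
rewrite /= mul1r mulrC; congr (_ * (nat_of_bool _)%:R).
have -> : [forall a, (lift_gatom a None \in B) == (a \in def_struct #|sym sg| B)] =
    (def_struct #|sym sg| B == A).
  apply/forallP/eqP => [eq_def|-> a]; last exact: forallP lift_BA a.
  by apply/setP => a; have := eq_def a; rewrite (eqP (forallP lift_BA a)) => /eqP.
have -> : [forall a, (a \in def_step B A) == (a \in A)] = (def_step B A == A).
  by apply/forallP/eqP => [eq_step|-> a //]; apply/setP => a; apply/eqP.
by apply/idP/idP => /eqP fix_A; apply/eqP; apply/def_struct_fixpoint.
Qed.

Lemma sum_atom_weight A a :
  (atom_weight A (lift_gatom a None) true + atom_weight A (lift_gatom a None) false) *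
  \prod_(j : 'I_(ncoins G))
    (atom_weight A (lift_gatom a (Some j)) true + atom_weight A (lift_gatom a (Some j)) false) =
  \sum_(i < nu G (tag a))
    (if sat A (gatom_env G a) (chi_ (tag a) i) then bern (a \in A) (mu_ _ i) else 0).
Proof.
have [i0 chi_i0] := chi_index A a.
have weight_j j :
    atom_weight A (lift_gatom a (Some j)) true + atom_weight A (lift_gatom a (Some j)) false =
    if j == widen_ord (nu_le_ncoins G (tag a)) i0 then bern (a \in A) (coin_prob (tag a) j) else 1.
  rewrite /atom_weight /= base_lift_gatom (case_holdsE chi_i0).
  by case: (_ == _); case: (a \in A); rewrite /= ?mulr1 ?mulr0 ?addr0 ?add0r ?bern_sum.
rewrite (eq_bigr _ (fun j _ => weight_j j)) -big_mkcond big_pred1_eq coin_prob_widen.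
rewrite /atom_weight /= base_lift_gatom (bigD1 i0) //= chi_i0 eqxx big1 => [|i i_i0].
  by case: (a \in A); rewrite /= ?addr0 ?add0r mul1r.
by rewrite chi_i0 (negbTE i_i0).
Qed.

End Marginal.

Unset Implicit Arguments.

Theorem proposition1 (Srt : finType) (R : realType) (sg : signature Srt)
  (G : lbn R sg) :
  exists (sg' : signature Srt) (G' : lbn R sg') (iota : sym sg -> sym sg'),
    [/\ injective iota,
        (forall S : sym sg, ar (iota S) = ar S),
        (forall (E : finType) (srt : E -> Srt) (A : structure sg srt),
           lbn_prob G A = \sum_(B : structure sg' srt | is_reduct iota B A)
                            lbn_prob G' B)
      & (forall S' : sym sg', is_root G' S' \/
           ((forall Q, par G' Q S' -> is_root G' Q) /\
            (forall i, @mu _ _ _ G' S' i = 0 \/ @mu _ _ _ G' S' i = 1)))].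
Proof.
exists (ext_sig G), (ext_lbn G), (fun S => (S, None)); split => //.
- by move=> S S' [].
- move=> E srt A; rewrite big_mkcond /=.
  under eq_bigr do rewrite ext_prob_reduct.
  rewrite sum_set_prod prod_ext_gatom; apply: eq_bigr => a _.
  by rewrite sum_atom_weight.
- exact: ext_lbn_layers.
Qed.
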